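(* Let $(n_1,\dots,n_r)$ be an ordered partition of $p$ and let $\mathcal{Z}\subset\mathrm{Sym}(p)$ be a linear subspace such that $\mathrm{BlockDiag}(x)\mathrm{BlockDiag}(y)\in\mathcal{Z}$ for all $x,y\in\mathcal{Z}$. Then for all $x,y\in\mathcal{Z}$, $\mathrm{BlockDiag}(x)\mathrm{BlockDiag}(y)=\mathrm{BlockDiag}(y)\mathrm{BlockDiag}(x)$.
   Context: $\mathrm{Sym}(p)$ is the space of real symmetric $p\times p$ matrices. For $x\in\mathrm{Sym}(p)$ written in blocks $X_{kh}\in\mathbb{R}^{n_k\times n_h}$ according to the partition, $\mathrm{BlockDiag}(x)$ is the block-diagonal matrix with diagonal blocks $X_{11},\dots,X_{rr}$ and zero off-diagonal blocks. *)

From HB Require Import structures.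
From mathcomp Require Import all_boot all_order all_algebra.
From mathcomp Require Import reals.
Set Implicit Arguments. Unset Strict Implicit. Unset Printing Implicit Defensive.
Import Order.TTheory GRing.Theory Num.Theory.
Local Open Scope ring_scope.

(* Ordered partition (n_0, ..., n_{r-1}) of p.  Index i : 'I_p lies in
   block k iff  n_0 + ... + n_{k-1} <= i < n_0 + ... + n_k. *)
Definition in_block (r : nat) (n : 'I_r -> nat) (k : 'I_r) (i : nat) : bool :=
  ((\sum_(h < r | (h < k)%N) n h)%N <= i < (\sum_(h < r | (h <= k)%N) n h)%N)%N.

Definition BlockDiag (R : nzRingType) (p r : nat) (n : 'I_r -> nat)
    (x : 'M[R]_p) : 'M[R]_p :=
  \matrix_(i < p, j < p)
    (if [exists k : 'I_r, in_block n k i && in_block n k j] then x i j else 0).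

From HB Require Import structures.
From mathcomp Require Import all_boot all_order all_algebra.
From mathcomp Require Import reals.
Import Order.TTheory GRing.Theory Num.Theory.
Local Open Scope ring_scope.

(* Transposition commutes with BlockDiag, so BlockDiag x and BlockDiag y are
   symmetric; their product lies in Z, hence is symmetric as well, and
   A B = (A B)^T = B^T A^T = B A. *)

Lemma trmx_BlockDiag (R : nzRingType) (p r : nat) (n : 'I_r -> nat)
    (x : 'M[R]_p) :
  (BlockDiag n x)^T = BlockDiag n x^T.
Proof.
apply/matrixP=> i j; rewrite !mxE.
congr (if _ then _ else _).
by apply: eq_existsb => k; rewrite andbC.
Qed.

Lemma sym_mulmx_comm (R : comNzRingType) (m : nat) (A B : 'M[R]_m) :
  A^T = A -> B^T = B -> (A *m B)^T = A *m B -> A *m B = B *m A.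
Proof. by move=> symA symB <-; rewrite trmx_mul symA symB. Qed.

Theorem corollary4p4 (R : realType) (p r : nat) (n : 'I_r -> nat)
    (Hpos : forall k, (0 < n k)%N)
    (Hsum : (\sum_(k < r) n k)%N = p)
    (Z : {vspace 'M[R]_p})
    (HZsym : forall x, x \in Z -> x^T = x)
    (Hclosed : forall x y, x \in Z -> y \in Z ->
       BlockDiag n x *m BlockDiag n y \in Z) :
  forall x y, x \in Z -> y \in Z ->
    BlockDiag n x *m BlockDiag n y = BlockDiag n y *m BlockDiag n x.
Proof.
move=> x y Zx Zy.
have symBD z : z \in Z -> (BlockDiag n z)^T = BlockDiag n z.
  by move=> Zz; rewrite trmx_BlockDiag HZsym.
apply: sym_mulmx_comm; [exact: symBD | exact: symBD |].
exact: HZsym (Hclosed x y Zx Zy).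
Qed.
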